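(* Let $(X,\omega_X)$ and $(Y,\omega_Y)$ be symplectic finite $\mathbb Z$-modules of the same type and consider $X\oplus Y$ with the symplectic form $\omega_X+\omega_Y$. Then the set of graphs $\{(x,f(x)):x\in X\}$ of antisymplectic maps $f\colon X\to Y$ equals the set of maximal isotropic subgroups $Z\subset X\oplus Y$ with $Z\cap(X\oplus 0)=Z\cap(0\oplus Y)=\{0\}$. In particular, any two such maximal isotropic subgroups $Z_1,Z_2$ are equivalent under the symplectic groups: there is $s\in\mathrm{Sp}(X,\mathbb Z)$ with $(s\times\mathrm{id}_Y)(Z_1)=Z_2$ (and likewise there is $t\in\mathrm{Sp}(Y,\mathbb Z)$ with $(\mathrm{id}_X\times t)(Z_1)=Z_2$).
   Context: A finite $\mathbb Z$-module of the form $(\mathbb Z_{d_1}\times\dots\times\mathbb Z_{d_k})^2$ with $1<d_1\mid\dots\mid d_k$ is called symplectic when equipped with the image of a symplectic form on $\mathbb Z^k\times\mathbb Z^k$ (an alternating, bilinear, nondegenerate form). Same type means isomorphic as abelian groups. $\mathrm{Sp}(X,\mathbb Z)$ is the group of form-preserving automorphisms. A $\mathbb Z$-linear map $f\colon X\to Y$ is antisymplectic if $\omega_X(x,y)=-\omega_Y(f(x),f(y))$ for all $x,y$. A subgroup is isotropic if the form vanishes on it. *)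

From HB Require Import structures.
From mathcomp Require Import all_boot all_order all_algebra.
Set Implicit Arguments. Unset Strict Implicit. Unset Printing Implicit Defensive.
Import GRing.Theory.
Local Open Scope ring_scope.

(* Forms take values in 'Z_n, which we view as the subgroup (1/n)Z/Z of Q/Z.
   Every Q/Z-valued bilinear form on a finite abelian group of exponent e
   factors through (1/e)Z/Z = 'Z_e, so quantifying over n and 'Z_n-valued
   forms is the same as quantifying over Q/Z-valued forms. *)

Definition biadditive (V : zmodType) (n : nat) (w : V -> V -> 'Z_n) : Prop :=
  (forall x, {morph w x : a b / a + b}) /\
  (forall y, {morph w ^~ y : a b / a + b}).

Definition alternating (V : zmodType) (n : nat) (w : V -> V -> 'Z_n) : Prop :=
  forall x, w x x = 0.

Definition nondegenerate (V : zmodType) (n : nat) (w : V -> V -> 'Z_n) : Prop :=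
  forall x, (forall y, w x y = 0) -> x = 0.

Definition symplectic (V : finZmodType) (n : nat) (w : V -> V -> 'Z_n) : Prop :=
  [/\ biadditive w, alternating w & nondegenerate w].

Definition additive_map (U V : zmodType) (f : U -> V) : Prop :=
  {morph f : a b / a + b}.

Definition same_type (X Y : finZmodType) : Prop :=
  exists f : X -> Y, additive_map f /\ bijective f.

Definition in_Sp (X : finZmodType) (n : nat) (w : X -> X -> 'Z_n) (s : X -> X) :=
  [/\ additive_map s, bijective s & forall x y, w (s x) (s y) = w x y].

Definition antisymplectic (X Y : finZmodType) (n : nat)
  (wX : X -> X -> 'Z_n) (wY : Y -> Y -> 'Z_n) (f : X -> Y) : Prop :=
  additive_map f /\ forall x y, wX x y = - wY (f x) (f y).

Definition sum_form (X Y : finZmodType) (n : nat)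
  (wX : X -> X -> 'Z_n) (wY : Y -> Y -> 'Z_n) (u v : X * Y) : 'Z_n :=
  wX u.1 v.1 + wY u.2 v.2.

Definition is_subgroup (X Y : finZmodType) (Z : {set X * Y}) : Prop :=
  (0 : X * Y) \in Z /\ forall a b : X * Y, a \in Z -> b \in Z -> a - b \in Z.

Definition isotropic (X Y : finZmodType) (n : nat)
  (w : X * Y -> X * Y -> 'Z_n) (Z : {set X * Y}) : Prop :=
  forall a b, a \in Z -> b \in Z -> w a b = 0.

Definition max_isotropic (X Y : finZmodType) (n : nat)
  (w : X * Y -> X * Y -> 'Z_n) (Z : {set X * Y}) : Prop :=
  [/\ is_subgroup Z, isotropic w Z &
     forall Z' : {set X * Y}, is_subgroup Z' -> isotropic w Z' ->
       Z \subset Z' -> Z' = Z].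

Definition graph (X Y : finType) (f : X -> Y) : {set X * Y} :=
  [set (x, f x) | x : X].

Definition left_summand (X Y : finZmodType) : {set X * Y} :=
  [set u : X * Y | u.2 == 0].
Definition right_summand (X Y : finZmodType) : {set X * Y} :=
  [set u : X * Y | u.1 == 0].

Definition transversal_lagrangian (X Y : finZmodType) (n : nat)
  (wX : X -> X -> 'Z_n) (wY : Y -> Y -> 'Z_n) (Z : {set X * Y}) : Prop :=
  [/\ max_isotropic (sum_form wX wY) Z,
      Z :&: left_summand X Y = [set (0 : X * Y)] &
      Z :&: right_summand X Y = [set (0 : X * Y)]].

From HB Require Import structures.
From mathcomp Require Import all_boot all_order all_algebra all_fingroup.
From mathcomp Require Import zify.
Set Implicit Arguments. Unset Strict Implicit. Unset Printing Implicit Defensive.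
Import GRing.Theory.
Local Open Scope ring_scope.

(* - A graph Z of an antisymplectic f is a subgroup, isotropic for wX + wY,
     meets both summands trivially (f is injective, hence bijective since
     #|X| = #|Y|), and is maximal: if (a, b) lies in an isotropic Z' >= Z, then
     (0, b - f a) is orthogonal to all of 0 (+) Y, so b = f a.
   - Conversely, for a transversal Lagrangian Z, the projection A of Z to X
     has trivial orthogonal: if x is orthogonal to A then Z + <(x, 0)> is
     isotropic, hence equals Z by maximality, so (x, 0) lies in Z meet X (+) 0.
     A duality count, #|Hom(A, Z_n)| <= #|A| (by adjoining generators one at a
     time), then forces A = X; as Z meets 0 (+) Y trivially, Z is a graph.
   - Composites of two antisymplectic maps are symplectic; this gives the
     transitivity statement. *)

Section AdditiveMaps.
Variables (U W : zmodType) (f : U -> W).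
Hypothesis f_add : additive_map f.

Lemma additive0 : f 0 = 0.
Proof. by apply: (addrI (f 0)); rewrite -f_add !addr0. Qed.

Lemma additiveN a : f (- a) = - f a.
Proof. by apply: (addrI (f a)); rewrite -f_add !subrr additive0. Qed.

Lemma additiveB a b : f (a - b) = f a - f b.
Proof. by rewrite f_add additiveN. Qed.

Lemma additiveMn a k : f (a *+ k) = f a *+ k.
Proof. by elim: k => [|k IH]; rewrite ?additive0 // !mulrS f_add IH. Qed.

Lemma additive_inv g : cancel f g -> cancel g f -> additive_map g.
Proof. by move=> fK gK u v; apply: (can_inj fK); rewrite f_add !gK. Qed.

End AdditiveMaps.

(* The solutions of z *+ m = 0 in 'Z_n number at most m: z |-> (z * m) %/ n
   maps them injectively into 'I_m. *)
Lemma card_kernel_mulrn (n m : nat) :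
  (0 < m)%N -> (#|[set z : 'Z_n | z *+ m == 0%R]| <= m)%N.
Proof.
move=> m_gt0; set N := (Zp_trunc n).+2.
pose h (z : 'Z_n) : 'I_m.-1.+1 := inord ((val z * m) %/ N).
have h_bound (z : 'Z_n) : ((val z * m) %/ N < m.-1.+1)%N.
  by rewrite prednK // ltn_divLR // mulnC ltn_pmul2l // ltn_ord.
have hE (z : 'Z_n) : z \in [set y : 'Z_n | y *+ m == 0%R] -> (val z * m = h z * N)%N.
  rewrite inE => /eqP/(congr1 val); rewrite Zp_mulrn /= => zm0.
  by rewrite /h inordK // {1}(divn_eq (val z * m) N) zm0 addn0.
apply: leq_trans (_ : #|'I_m.-1.+1| <= m)%N; last by rewrite card_ord prednK.
apply: (@leq_card_in _ _ h) => z1 z2 z1_ker z2_ker e; apply: val_inj.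
by apply/eqP; rewrite -(eqn_pmul2r m_gt0) (hE _ z1_ker) (hE _ z2_ker) e.
Qed.

Section Subgroups.
Variable V : finZmodType.

Definition subgroup (S : {set V}) : Prop :=
  (0 : V) \in S /\ forall a b, a \in S -> b \in S -> a - b \in S.

Lemma subgroupN (S : {set V}) a : subgroup S -> a \in S -> - a \in S.
Proof. by case=> S0 SB Sa; rewrite -sub0r SB. Qed.

Lemma subgroupD (S : {set V}) a b : subgroup S -> a \in S -> b \in S -> a + b \in S.
Proof. by move=> [S0 SB] Sa Sb; rewrite -[b]opprK SB // -sub0r SB. Qed.

Lemma subgroupMn (S : {set V}) a k : subgroup S -> a \in S -> a *+ k \in S.
Proof. by move=> S_sub Sa; elim: k => [|k IH]; [case: S_sub|rewrite mulrS subgroupD]. Qed.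

Lemma subgroup_intro (S : {set V}) : (0 : V) \in S ->
  (forall a b, a \in S -> b \in S -> a + b \in S) ->
  (forall a, a \in S -> - a \in S) -> subgroup S.
Proof. by move=> S0 SD SN; split=> // a b Sa Sb; rewrite SD ?SN. Qed.

(* Adjoining g to a subgroup M: with m the least k > 0 such that g *+ k lies
   in M, the subgroup M + <g> is the disjoint union of the cosets
   M + g *+ i, i < m. *)
Section Adjoin.
Variables (M : {set V}) (g : V).

(* Before M is known to contain 0, g *+ k == 0 is also accepted, so that the
   order of g is always a candidate. *)
Definition adjoin_candidate k := (0 < k)%N && ((g *+ k == 0) || (g *+ k \in M)).

Lemma adjoin_candidate_exists : exists k, adjoin_candidate k.
Proof.
by exists #[g]%g; rewrite /adjoin_candidate order_gt0 [g *+ _](expg_order g) eqxx.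
Qed.

Definition adjoin_index := ex_minn adjoin_candidate_exists.

Definition adjoin : {set V} :=
  [set p.2 + g *+ p.1 | p : 'I_adjoin_index * V in setX [set: 'I_adjoin_index] M].

Hypothesis M_sub : subgroup M.

Lemma adjoin_indexP : [/\ (0 < adjoin_index)%N, g *+ adjoin_index \in M &
  forall k, (0 < k)%N -> g *+ k \in M -> (adjoin_index <= k)%N].
Proof.
rewrite /adjoin_index; case: ex_minnP => m /andP[m_gt0 gm] m_min; split=> //.
  by case/orP: gm => // /eqP ->; case: M_sub.
by move=> k k_gt0 gk; apply: m_min; rewrite /adjoin_candidate k_gt0 gk orbT.
Qed.

Lemma mem_adjoin u k : u \in M -> u + g *+ k \in adjoin.
Proof.
have [m_gt0 gm _] := adjoin_indexP => Mu.
rewrite (divn_eq k adjoin_index) mulrnDr addrA.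
apply/imsetP.
exists (Ordinal (ltn_pmod k m_gt0), u + g *+ (k %/ adjoin_index * adjoin_index)) => //.
by rewrite !inE /= mulnC mulrnA subgroupD // subgroupMn.
Qed.

Lemma adjoinP x : x \in adjoin -> exists u k, u \in M /\ x = u + g *+ k.
Proof. by case/imsetP => -[i u]; rewrite !inE /= => Mu ->; exists u, i. Qed.

Lemma adjoin_subgroup : subgroup adjoin.
Proof.
have [m_gt0 gm _] := adjoin_indexP.
apply: subgroup_intro.
- by rewrite -[0]addr0 -(mulr0n g) mem_adjoin //; case: M_sub.
- move=> _ _ /adjoinP[u [k [Mu ->]]] /adjoinP[u' [k' [Mu' ->]]].
  by rewrite addrACA -mulrnDr mem_adjoin // subgroupD.
- move=> _ /adjoinP[u [k [Mu ->]]].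
  have Ngk : - (g *+ k) = - (g *+ adjoin_index *+ k) + g *+ (adjoin_index * k - k).
    by rewrite mulrnBr ?leq_pmull // -mulrnA addrA addNr add0r.
  by rewrite opprD Ngk addrA mem_adjoin // subgroupD ?subgroupN // subgroupMn.
Qed.

Lemma sub_adjoin : M \subset adjoin.
Proof. by apply/subsetP=> u Mu; rewrite -[u]addr0 -(mulr0n g) mem_adjoin. Qed.

Lemma mem_adjoin_gen : g \in adjoin.
Proof. by rewrite -[g]add0r -[g in _ + g]mulr1n mem_adjoin //; case: M_sub. Qed.

Lemma card_adjoin : #|adjoin| = (adjoin_index * #|M|)%N.
Proof.
have [m_gt0 gm m_min] := adjoin_indexP.
rewrite card_in_imset ?cardsX ?cardsT ?card_ord // => -[i u] [j u'].
rewrite !inE /= => Mu Mu' e.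
(* two representatives with i <= j differ by g *+ (j - i) in M, so i = j *)
have ord_eq (a b : 'I_adjoin_index) (v v' : V) : v \in M -> v' \in M ->
    (a <= b)%N -> v + g *+ a = v' + g *+ b -> a = b.
  move=> Mv Mv' ab e_ab; apply/val_inj/eqP; rewrite eqn_leq ab /= leqNgt.
  apply/negP => ab_lt.
  have : g *+ (b - a) \in M.
    rewrite mulrnBr // -[g *+ b](addKr v') -e_ab addrA addrK addrC.
    by case: M_sub => _; apply.
  have ba_gt0 : (0 < b - a)%N by rewrite subn_gt0.
  move/(m_min _ ba_gt0).
  by rewrite leqNgt (leq_ltn_trans (leq_subr a b) (ltn_ord b)).
have ij : i = j.
  case: (leqP i j) => h; first exact: ord_eq e.
  exact: esym (ord_eq _ _ _ _ Mu' Mu (ltnW h) (esym e)).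
by move: e; rewrite ij => /addIr ->.
Qed.

End Adjoin.

End Subgroups.

Lemma subgroup_image (V W : finZmodType) (f : V -> W) (S : {set V}) :
  additive_map f -> subgroup S -> subgroup (f @: S).
Proof.
move=> f_add [S0 SB]; split; first by apply/imsetP; exists 0; rewrite ?additive0.
move=> _ _ /imsetP[a Sa ->] /imsetP[b Sb ->].
by apply/imsetP; exists (a - b); rewrite ?SB ?additiveB.
Qed.

(* Homomorphisms from a subgroup S of V to 'Z_n, represented as functions on V
   vanishing outside S. *)
Section Homs.
Variables (V : finZmodType) (n : nat).

Definition homs (S : {set V}) : {set {ffun V -> 'Z_n}} :=
  [set f : {ffun V -> 'Z_n} | [forall x, (x \notin S) ==> (f x == 0)] &&
     [forall x in S, forall y in S, f (x + y) == f x + f y]].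

Lemma homsP (S : {set V}) (f : {ffun V -> 'Z_n}) :
  reflect ((forall x, x \notin S -> f x = 0) /\
           (forall x y, x \in S -> y \in S -> f (x + y) = f x + f y))
          (f \in homs S).
Proof.
rewrite inE; apply: (iffP andP) => [[/forallP f0 /forall_inP fD]|[f0 fD]]; split.
- by move=> x Sx; apply/eqP; have /implyP := f0 x; apply.
- by move=> x y Sx Sy; have /forall_inP/(_ y Sy)/eqP := fD x Sx.
- by apply/forallP => x; apply/implyP => /f0 ->.
- by apply/forall_inP => x Sx; apply/forall_inP => y Sy; rewrite fD.
Qed.

Lemma homs0 (S : {set V}) f : (0 : V) \in S -> f \in homs S -> f 0 = 0.
Proof. by move=> S0 /homsP[_ fD]; apply: (addrI (f 0)); rewrite -fD // !addr0. Qed.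

Lemma homsMn (S : {set V}) f g k : subgroup S -> f \in homs S -> g \in S ->
  f (g *+ k) = f g *+ k.
Proof.
move=> S_sub hf Sg; elim: k => [|k IH].
  by rewrite !mulr0n (homs0 _ hf) //; case: S_sub.
by case/homsP: hf => _ fD; rewrite !mulrS fD ?IH // subgroupMn.
Qed.

(* A homomorphism on M + <g> is determined by its restriction to M and its
   value z at g; given the restriction psi, z satisfies z *+ m = psi (g *+ m),
   so it ranges over a coset of the m-torsion of 'Z_n, of size at most m. *)
Lemma card_homs_adjoin (M : {set V}) g : subgroup M ->
  (#|homs (adjoin M g)| <= adjoin_index M g * #|homs M|)%N.
Proof.
move=> M_sub; set E := adjoin M g; set m := adjoin_index M g.
have [m_gt0 gm _] := adjoin_indexP g M_sub.
have E_sub : subgroup E := adjoin_subgroup g M_sub.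
have sME : M \subset E := sub_adjoin g M_sub.
have Eg : g \in E := mem_adjoin_gen g M_sub.
pose restr (f : {ffun V -> 'Z_n}) : {ffun V -> 'Z_n} := [ffun x => if x \in M then f x else 0].
pose root (psi : {ffun V -> 'Z_n}) := odflt 0 [pick z : 'Z_n | z *+ m == psi (g *+ m)].
pose F f := (restr f, f g - root (restr f)).
have F_inj : {in homs E &, injective F}.
  move=> f1 f2 hf1 hf2 e; have e_restr : restr f1 = restr f2 := congr1 fst e.
  have e_val := congr1 snd e; rewrite /= e_restr in e_val.
  have e_g : f1 g = f2 g by apply: (addIr (- root (restr f2))).
  apply/ffunP => x; case: (boolP (x \in E)) => Ex; last first.
    by case/homsP: hf1 => -> //; case/homsP: hf2 => -> //.
  case/adjoinP: Ex => u [k [Mu ->]].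
  have Eu : u \in E := subsetP sME u Mu.
  have Egk : g *+ k \in E by apply: subgroupMn.
  case/homsP: (hf1) => _ f1D; case/homsP: (hf2) => _ f2D.
  rewrite f1D // f2D // (homsMn k E_sub hf1 Eg) (homsMn k E_sub hf2 Eg) e_g.
  by have := congr1 (fun h : {ffun V -> 'Z_n} => h u) e_restr; rewrite !ffunE Mu => ->.
have F_range : F @: homs E \subset setX (homs M) [set z : 'Z_n | z *+ m == 0%R].
  apply/subsetP => _ /imsetP[f hf ->]; rewrite in_setX.
  have f_gm : f (g *+ m) = f g *+ m := homsMn m E_sub hf Eg.
  case/homsP: (hf) => f0 fD; apply/andP; split.
    apply/homsP; split=> [x Mx|x y Mx My]; first by rewrite ffunE (negbTE Mx).
    by rewrite !ffunE Mx My subgroupD // fD // (subsetP sME).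
  rewrite inE /root; case: pickP => [z /eqP z_root|no_root]; last first.
    by have := no_root (f g); rewrite ffunE gm f_gm eqxx.
  by rewrite mulrnBl z_root ffunE gm f_gm subrr.
rewrite -(card_in_imset F_inj); apply: leq_trans (subset_leq_card F_range) _.
by rewrite cardsX mulnC leq_mul2r card_kernel_mulrn ?orbT.
Qed.

(* If #|Hom(M, Z_n)| <= #|M| for a subgroup M of A, then the same holds for A:
   adjoin elements of A to M until A is reached. *)
Lemma card_homs_grow (A M : {set V}) : subgroup A -> subgroup M -> M \subset A ->
  (#|homs M| <= #|M|)%N -> (#|homs A| <= #|A|)%N.
Proof.
move=> A_sub; have [k] := ubnP (#|A| - #|M|)%N.
elim: k M => // k IH M lt_k M_sub sMA homsM.
case: (boolP (A \subset M)) => [sAM|/subsetPn[g Ag Mg]].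
  by have -> : A = M by apply/eqP; rewrite eqEsubset sAM sMA.
have sEA : adjoin M g \subset A.
  apply/subsetP => _ /adjoinP[u [j [Mu ->]]].
  by rewrite subgroupD ?subgroupMn // (subsetP sMA).
have ltME : (#|M| < #|adjoin M g|)%N.
  apply: proper_card; apply/properP; split; first exact: sub_adjoin.
  by exists g; rewrite ?mem_adjoin_gen.
apply: (IH (adjoin M g)) => //.
- by have := subset_leq_card sEA; lia.
- exact: adjoin_subgroup.
- rewrite card_adjoin //; apply: leq_trans (card_homs_adjoin g M_sub) _.
  by rewrite leq_mul2l homsM orbT.
Qed.

Lemma card_homs (A : {set V}) : subgroup A -> (#|homs A| <= #|A|)%N.
Proof.
move=> A_sub; have A0 : (0 : V) \in A by case: A_sub.
apply: (card_homs_grow A_sub (M := [set (0 : V)])).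
- by split=> [|a b]; rewrite ?inE // => /eqP -> /eqP ->; rewrite subrr.
- by rewrite sub1set.
rewrite cards1 -(cards1 ([ffun=> 0] : {ffun V -> 'Z_n})).
apply/subset_leq_card/subsetP => f hf; rewrite inE; apply/eqP/ffunP => x.
rewrite ffunE; case: (eqVneq x 0) => [->|nx0]; first by rewrite (homs0 _ hf) ?inE.
by case/homsP: hf => -> //; rewrite inE.
Qed.

End Homs.

Section Forms.
Variables (V : finZmodType) (n : nat) (w : V -> V -> 'Z_n).
Hypothesis w_bi : biadditive w.

Lemma form0l a : w 0 a = 0. Proof. exact: additive0 (w_bi.2 a). Qed.
Lemma form0r a : w a 0 = 0. Proof. exact: additive0 (w_bi.1 a). Qed.

Lemma form_skew : alternating w -> forall a b, w a b = - w b a.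
Proof.
move=> w_alt a b; apply/eqP; rewrite -subr_eq0 opprK.
by have := w_alt (a + b); rewrite w_bi.2 !w_bi.1 !w_alt add0r addr0 => ->.
Qed.

Definition isotropic_set (S : {set V}) : Prop :=
  forall a b, a \in S -> b \in S -> w a b = 0.

Lemma isotropic_adjoin (M : {set V}) g : isotropic_set M ->
  w g g = 0 -> (forall u, u \in M -> w u g = 0 /\ w g u = 0) ->
  isotropic_set (adjoin M g).
Proof.
move=> M_iso wgg g_perp _ _ /adjoinP[u [j [Mu ->]]] /adjoinP[u' [j' [Mu' ->]]].
rewrite w_bi.2 !w_bi.1 !(additiveMn (w_bi.2 _)) !(additiveMn (w_bi.1 _)) wgg M_iso //.
by have [-> _] := g_perp u Mu; have [_ ->] := g_perp u' Mu'; rewrite !mul0rn !addr0.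
Qed.

(* A subgroup with trivial left orthogonal is everything: x |-> w x _ embeds
   V into Hom(A, 'Z_n), which has at most #|A| elements. *)
Lemma perp_trivial_full (A : {set V}) : subgroup A ->
  (forall x, (forall a, a \in A -> w x a = 0) -> x = 0) -> A = [set: V].
Proof.
move=> A_sub A_perp.
pose phi x : {ffun V -> 'Z_n} := [ffun y => if y \in A then w x y else 0].
have phi_inj : injective phi.
  move=> x1 x2 e; apply/eqP; rewrite -subr_eq0; apply/eqP; apply: A_perp => a Aa.
  have := congr1 (fun h : {ffun V -> 'Z_n} => h a) e; rewrite !ffunE Aa => e_a.
  by rewrite (additiveB (w_bi.2 a)) e_a subrr.
have phi_homs : phi @: [set: V] \subset homs n A.
  apply/subsetP => _ /imsetP[x _ ->]; apply/homsP; split=> [y Ay|a b Aa Ab].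
    by rewrite ffunE (negbTE Ay).
  by rewrite !ffunE Aa Ab subgroupD // w_bi.1.
have := leq_trans (subset_leq_card phi_homs) (card_homs n A_sub).
by rewrite card_imset // => cardVA; apply/eqP; rewrite eqEcard subsetT.
Qed.

End Forms.

Section Antisymplectic.
Variables (n : nat) (A B : finZmodType) (wA : A -> A -> 'Z_n) (wB : B -> B -> 'Z_n).

Lemma antisymplectic_inv f g : antisymplectic wA wB f ->
  cancel f g -> cancel g f -> antisymplectic wB wA g.
Proof.
case=> f_add f_anti fK gK; split; first exact: (additive_inv f_add fK gK).
by move=> x y; rewrite f_anti !gK opprK.
Qed.

Lemma antisymplectic_comp_Sp f g : antisymplectic wA wB f -> antisymplectic wB wA g ->
  bijective f -> bijective g -> in_Sp wA (g \o f).
Proof.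
move=> [f_add f_anti] [g_add g_anti] f_bij g_bij; split.
- by move=> a b /=; rewrite f_add g_add.
- exact: bij_comp.
- by move=> x y /=; rewrite [RHS]f_anti g_anti opprK.
Qed.

End Antisymplectic.

Lemma graphP (X Y : finType) (f : X -> Y) x y : ((x, y) \in graph f) = (y == f x).
Proof. by apply/imsetP/eqP => [[x' _ [-> ->]]|->]; last by exists x. Qed.

Lemma graph_map_fst (X Y : finType) (s : X -> X) (f1 f2 : X -> Y) :
  bijective s -> (forall x, f2 (s x) = f1 x) ->
  [set (s u.1, u.2) | u in graph f1] = graph f2.
Proof.
case=> s' sK s'K f_s; apply/setP => -[x y]; rewrite graphP.
apply/imsetP/eqP => [[_ /imsetP[x' _ ->] [-> ->]]|->]; first by rewrite f_s.
by exists (s' x, f1 (s' x)); rewrite ?graphP // -f_s !s'K.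
Qed.

Lemma graph_map_snd (X Y : finType) (t : Y -> Y) (f1 f2 : X -> Y) :
  (forall x, t (f1 x) = f2 x) -> [set (u.1, t u.2) | u in graph f1] = graph f2.
Proof. by move=> t_f; rewrite -imset_comp; apply: eq_imset => x /=; rewrite t_f. Qed.

(* X (+) Y as a finite Z-module, so that the lemmas on subgroups and forms
   apply to subsets of X * Y. *)
Definition sum_module (X Y : finZmodType) := (X * Y)%type.
HB.instance Definition _ (X Y : finZmodType) :=
  GRing.Zmodule.copy (sum_module X Y) (X * Y)%type.
HB.instance Definition _ (X Y : finZmodType) :=
  Finite.copy (sum_module X Y) (X * Y)%type.

Section Transversal.
Variables (n : nat) (X Y : finZmodType) (wX : X -> X -> 'Z_n) (wY : Y -> Y -> 'Z_n).
Hypotheses (X_symp : symplectic wX) (Y_symp : symplectic wY).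

Lemma sum_form_biadditive : @biadditive (sum_module X Y) n (sum_form wX wY).
Proof.
case: X_symp => X_bi _ _; case: Y_symp => Y_bi _ _.
by split=> u a b; rewrite /sum_form /= ?X_bi.1 ?Y_bi.1 ?X_bi.2 ?Y_bi.2 addrACA.
Qed.

Lemma antisymplectic_inj f : antisymplectic wX wY f -> injective f.
Proof.
case=> f_add f_anti x x' e; case: X_symp => _ _ X_nd; case: Y_symp => Y_bi _ _.
apply/eqP; rewrite -subr_eq0; apply/eqP; apply: X_nd => y.
by rewrite f_anti (additiveB f_add) e subrr (form0l Y_bi) oppr0.
Qed.

Lemma graph_transversal f : antisymplectic wX wY f -> bijective f ->
  transversal_lagrangian wX wY (graph f).
Proof.
move=> [f_add f_anti] [g fK gK].
have f_inj : injective f := can_inj fK; have f0 := additive0 f_add.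
case: X_symp => X_bi _ _; case: Y_symp => _ _ Y_nd.
have graph0 : (0 : X * Y) \in graph f by rewrite -[0]/(0 : X, 0 : Y) graphP f0.
have meet0 (S : {set X * Y}) : (forall x, (x, f x) \in S -> x = 0) ->
    (0 : X * Y) \in S -> graph f :&: S = [set (0 : X * Y)].
  move=> S_graph S0; apply/setP => -[x y]; rewrite !inE graphP.
  apply/andP/eqP => [[/eqP -> /S_graph x0]|[-> ->]]; first by rewrite x0 f0.
  by rewrite f0.
split; [split| |].
- split=> // _ _ /imsetP[x _ ->] /imsetP[x' _ ->].
  by rewrite -[_ - _]/(x - x', f x - f x') graphP (additiveB f_add).
- by move=> _ _ /imsetP[x _ ->] /imsetP[x' _ ->]; rewrite /sum_form /= f_anti addNr.
- (* if (a, b) lies in an isotropic Z' containing graph f, then (0, b - f a)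
     is orthogonal to every (g y, y), hence b = f a *)
  move=> Z' [_ Z'B] Z'_iso sGZ'; apply/eqP; rewrite eqEsubset sGZ' andbT.
  apply/subsetP => -[a b] Z'ab; rewrite graphP -subr_eq0; apply/eqP; apply: Y_nd => y.
  have Z'a : (a, f a) \in Z' by rewrite (subsetP sGZ') ?graphP.
  have Z'y : (g y, y) \in Z' by rewrite (subsetP sGZ') ?graphP ?gK.
  have := Z'_iso _ _ (Z'B _ _ Z'ab Z'a) Z'y.
  by rewrite /sum_form /= subrr (form0l X_bi) add0r.
- by apply: meet0 => [x|]; rewrite inE //= => /eqP fx0; apply: f_inj; rewrite f0.
- by apply: meet0 => [x|]; rewrite inE //= => /eqP.
Qed.

Section OfTransversal.
Variable Z : {set X * Y}.
Hypothesis Z_trans : transversal_lagrangian wX wY Z.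

(* The projection of Z to X has trivial orthogonal: for such x, Z + <(x, 0)>
   is isotropic, hence equal to Z, so (x, 0) lies in Z meet X (+) 0. *)
Lemma transversal_perp x : (forall u, u \in Z -> wX x u.1 = 0) -> x = 0.
Proof.
case: Z_trans => -[Z_sub Z_iso Z_max] Z_left _ x_perp.
case: X_symp => X_bi X_alt _; case: Y_symp => Y_bi _ _.
pose g : sum_module X Y := (x, 0).
have Z_sub' : subgroup (Z : {set sum_module X Y}) := Z_sub.
have iso_ext : isotropic (sum_form wX wY) (adjoin (Z : {set sum_module X Y}) g).
  apply: (isotropic_adjoin sum_form_biadditive) => //.
    by rewrite /sum_form /= X_alt (form0l Y_bi) addr0.
  move=> u Zu; rewrite /sum_form /= (form0l Y_bi) (form0r Y_bi) !addr0.
  by rewrite (form_skew X_bi X_alt u.1) x_perp ?oppr0.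
have Z_eq := Z_max _ (adjoin_subgroup g Z_sub') iso_ext (sub_adjoin g Z_sub').
have Zg : g \in Z by rewrite -Z_eq; exact: mem_adjoin_gen.
have : g \in Z :&: left_summand X Y by rewrite !inE Zg /=.
by rewrite Z_left inE => /eqP [].
Qed.

Lemma transversal_total x : exists y, (x, y) \in Z.
Proof.
case: Z_trans => -[Z_sub _ _] _ _; case: X_symp => X_bi _ _.
have A_sub : subgroup [set u.1 | u in (Z : {set sum_module X Y})].
  exact: (@subgroup_image (sum_module X Y) X (fun u => u.1) Z (fun a b => erefl) Z_sub).
have A_full := perp_trivial_full X_bi A_sub.
have : x \in [set u.1 | u in Z].
  rewrite A_full ?inE // => x' x'_perp.
  by apply: transversal_perp => u Zu; rewrite x'_perp ?imset_f.
by case/imsetP => -[a b] Zab ->; exists b.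
Qed.

(* Z meets 0 (+) Y trivially, so each x has at most one partner in Z. *)
Lemma transversal_functional x y y' : (x, y) \in Z -> (x, y') \in Z -> y = y'.
Proof.
case: Z_trans => -[[_ Z_B] _ _] _ Z_right Zy Zy'.
have : (x, y) - (x, y') \in Z :&: right_summand X Y by rewrite !inE Z_B //= subrr.
by rewrite Z_right inE => /eqP/(congr1 snd)/eqP; rewrite subr_eq0 => /eqP.
Qed.

(* Hence Z is the graph of a map, which is additive since Z is a subgroup and
   antisymplectic since Z is isotropic. *)
Lemma transversal_graph : exists f, antisymplectic wX wY f /\ Z = graph f.
Proof.
case: (Z_trans) => -[Z_sub Z_iso _] _ _.
pose f x := odflt 0 [pick y | (x, y) \in Z].
have Zf x : (x, f x) \in Z.
  rewrite /f; case: pickP => [y //|no_y].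
  by have [y Zy] := transversal_total x; move: (no_y y); rewrite Zy.
exists f; split; [split|].
- move=> a b; apply: (transversal_functional (Zf (a + b))).
  exact: (subgroupD (V := sum_module X Y) Z_sub (Zf a) (Zf b)).
- by move=> a b; apply/eqP; rewrite -addr_eq0; apply/eqP; exact: (Z_iso _ _ (Zf a) (Zf b)).
- apply/setP => -[a b]; rewrite graphP.
  by apply/idP/eqP => [Zab|->//]; apply: transversal_functional Zab (Zf a).
Qed.

End OfTransversal.
End Transversal.

Theorem mainTheorem3 (n : nat) (X Y : finZmodType)
  (wX : X -> X -> 'Z_n) (wY : Y -> Y -> 'Z_n) :
  symplectic wX -> symplectic wY -> same_type X Y ->
  (forall Z : {set X * Y},
     (exists f : X -> Y, antisymplectic wX wY f /\ Z = graph f) <->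
     transversal_lagrangian wX wY Z) /\
  (forall Z1 Z2 : {set X * Y},
     transversal_lagrangian wX wY Z1 -> transversal_lagrangian wX wY Z2 ->
     (exists s : X -> X, in_Sp wX s /\
        [set (s u.1, u.2) | u in Z1] = Z2) /\
     (exists t : Y -> Y, in_Sp wY t /\
        [set (u.1, t u.2) | u in Z1] = Z2)).
Proof.
move=> X_symp Y_symp [h [_ h_bij]].
have anti_bij f : antisymplectic wX wY f -> bijective f.
  move=> f_anti; apply: inj_card_bij (antisymplectic_inj X_symp Y_symp f_anti) _.
  by rewrite (bij_eq_card h_bij).
split=> [Z|Z1 Z2 /transversal_graph-/(_ X_symp Y_symp)[f1 [f1_anti ->]]].
  split=> [[f [f_anti ->]]|]; last exact: transversal_graph.
  exact: graph_transversal f_anti (anti_bij f f_anti).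
move=> /transversal_graph-/(_ X_symp Y_symp)[f2 [f2_anti ->]].
have [g1 f1K g1K] := anti_bij f1 f1_anti; have [g2 f2K g2K] := anti_bij f2 f2_anti.
have g1_anti := antisymplectic_inv f1_anti f1K g1K.
have g2_anti := antisymplectic_inv f2_anti f2K g2K.
have f1_bij : bijective f1 := Bijective f1K g1K.
have f2_bij : bijective f2 := Bijective f2K g2K.
have g1_bij : bijective g1 := Bijective g1K f1K.
have g2_bij : bijective g2 := Bijective g2K f2K.
split.
- (* s = f2^-1 o f1 carries (x, f1 x) to (s x, f2 (s x)) *)
  exists (g2 \o f1); split.
    exact: antisymplectic_comp_Sp f1_anti g2_anti f1_bij g2_bij.
  by apply: graph_map_fst => [|x /=]; [exact: bij_comp g2_bij f1_bij|rewrite g2K].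
- (* t = f2 o f1^-1 carries (x, f1 x) to (x, f2 x) *)
  exists (f2 \o g1); split.
    exact: antisymplectic_comp_Sp g1_anti f2_anti g1_bij f2_bij.
  by apply: graph_map_snd => x /=; rewrite f1K.
Qed.
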